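(* Let $\Omega\subset\mathbb{R}^d$ be open with Lipschitz boundary, $\pi\in\mathcal M^+(\Omega)$ with $\pi(\Omega)>0$, and let $\varphi:[0,\infty)\to[0,\infty]$ be convex with $\varphi(1)=\varphi'(1)=0$ and $\varphi''(1)=1$. Then there is no constant $c>0$ such that $$\int\Big|\nabla\Big(\varphi'\big(\tfrac{d\mu}{d\pi}\big)\Big)\Big|^2\,d\mu\ \ge\ c\,\mathrm{D}_\varphi(\mu|\pi)$$ holds for all $\mu\in\mathcal M^+(\Omega)$.
   Context: $\mathrm{D}_\varphi(\mu|\nu)=\int\varphi(\frac{d\mu}{d\nu})\,d\nu$ if $\mu\ll\nu$, $+\infty$ otherwise. $\mathcal M^+(\Omega)$: nonnegative finite measures. *)

From HB Require Import structures.
From mathcomp Require Import all_boot all_order all_algebra.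
From mathcomp Require Import all_classical all_reals all_analysis.
Set Implicit Arguments. Unset Strict Implicit. Unset Printing Implicit Defensive.
Import Order.TTheory GRing.Theory Num.Theory.
Import numFieldNormedType.Exports.
Local Open Scope classical_set_scope.
Local Open Scope ring_scope.

(* R^d is modelled by row vectors 'rV[R]_d; as a measurable space it carries
   the Borel sigma-algebra (generated by the open sets). *)
Notation Rd R d := (g_sigma_algebraType (@open 'rV[R]_d)).

Definition dotv {R : realType} {d : nat} (u v : 'rV[R]_d) : R := (u *m v^T) 0 0.

(* Ω has a Lipschitz boundary: around every boundary point x there is a ball
   B(x,r), a unit direction ν and a Lipschitz function γ of the coordinates
   orthogonal to ν such that Ω ∩ B(x,r) is the strict epigraph of γ in
   direction ν (intersected with B(x,r)). *)
Definition lipschitz_boundary {R : realType} {d : nat} (O : set 'rV[R]_d) : Prop :=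
  forall x : 'rV[R]_d, closure O x -> ~ O x ->
    exists r : R, 0 < r /\
    exists nu : 'rV[R]_d, dotv nu nu = 1 /\
    exists gam : 'rV[R]_d -> R,
      (exists L : R, forall u v, `|gam u - gam v| <= L * `|u - v|) /\
      (forall y, ball x r y ->
         (O y <-> gam (y - dotv y nu *: nu) < dotv y nu)).

Definition grad_norm2 {R : realType} {d : nat} (g : 'rV[R]_d -> R) (x : 'rV[R]_d) : R :=
  \sum_(i < d) (derive g x (delta_mx 0 i)) ^+ 2.

Definition Dphi {R : realType} {dd} {T : measurableType dd}
  (phi : R -> \bar R) (mu pi : {finite_measure set T -> \bar R}) : \bar R :=
  if `[< mu `<< pi >] then
    (\int[pi]_x phi (fine (Radon_Nikodym (charge_of_finite_measure mu) pi x)))%E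
  else (+oo)%E.

From HB Require Import structures.
From mathcomp Require Import all_boot all_order all_algebra.
From mathcomp Require Import all_classical all_reals all_analysis.
From mathcomp Require Import measurable_realfun.
Set Implicit Arguments.
Unset Strict Implicit.
Unset Printing Implicit Defensive.

Import Order.TTheory GRing.Theory Num.Theory.
Import numFieldNormedType.Exports.
Local Open Scope classical_set_scope.
Local Open Scope ring_scope.

(* Constant densities give a counterexample.  If mu = k pi for a constant
   k >= 0, then phi'(dmu/dpi) is constant, so the left-hand side vanishes,
   while D_phi(mu|pi) = phi(k) pi(Omega).  Since phi''(1) = 1, phi is not
   identically zero near 1: some k close to 1 has 0 < phi(k) < +oo, and then
   the inequality fails for every c > 0. *)

Lemma derive1_near0 (R : realType) (f : R -> R) (a : R) :
  (\forall t \near a, f t = 0) -> \forall t \near a, derive1 f t = 0.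
Proof.
move=> f0; apply: filterS (nbhs_interior f0) => t ft0.
by rewrite derive1E (@near_eq_derive _ _ _ _ (cst 0)) ?derive_cst.
Qed.

Lemma exists_fin_nonzero_near (R : realType) (phi : R -> \bar R) (a : R) :
  (\forall t \near a, phi t \is a fin_num) ->
  (\forall t \near a, derivable (fun s => fine (phi s)) t 1) ->
  derive1 (derive1 (fun s => fine (phi s))) a != 0 ->
  exists k, [/\ phi k \is a fin_num, derivable (fun s => fine (phi s)) k 1
              & fine (phi k) != 0].
Proof.
move=> phi_fin phi_der; apply: contra_neqP => no_k.
have phi0 : \forall t \near a, fine (phi t) = 0.
  near=> t; apply: contra_notP no_k => phit_neq0.
  by exists t; split; [near: t | near: t | exact/eqP].
exact: nbhs_singleton (derive1_near0 (derive1_near0 phi0)).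
Unshelve. all: by end_near.
Qed.

Lemma grad_norm2_cst (R : realType) (d : nat) (a : R) (x : 'rV[R]_d) :
  grad_norm2 (fun=> a) x = 0.
Proof. by rewrite /grad_norm2 big1 // => i _; rewrite derive_cst expr0n. Qed.

(* Unlike ge0_le_integral, no measurability is required (phi is not assumed
   measurable): the integral of a nonnegative function is the supremum of the
   integrals of the simple functions below it. *)
Lemma ge0_le_integralT d (T : measurableType d) (R : realType)
    (mu : {measure set T -> \bar R}) (f g : T -> \bar R) :
  (forall x, 0 <= f x)%E -> (forall x, f x <= g x)%E ->
  (\int[mu]_x f x <= \int[mu]_x g x)%E.
Proof.
move=> f0 fg; have g0 x : (0 <= g x)%E := le_trans (f0 x) (fg x).
rewrite !ge0_integralTE //; apply: ereal_sup_le => _ [h hf <-].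
by exists h => // x; exact: le_trans (hf x) (fg x).
Qed.

Section constant_density.
Context d (T : measurableType d) (R : realType).
Variable pi : {finite_measure set T -> \bar R}.
Local Open Scope ereal_scope.

Lemma mscale_dominates (k : {nonneg R}) : mscale k pi `<< pi.
Proof.
by apply/null_content_dominatesP => A mA piA0; rewrite /mscale /= piA0 mule0.
Qed.

Lemma Radon_Nikodym_mscale (k : {nonneg R}) :
  ae_eq pi setT (Radon_Nikodym (charge_of_finite_measure (mscale k pi)) pi)
                (cst k%:num%:E).
Proof.
have muk := mscale_dominates k.
apply: integral_ae_eq => //; first exact: Radon_Nikodym_integrable.
move=> E _ mE; rewrite -Radon_Nikodym_integral //.
by rewrite /charge_of_finite_measure /= /mscale integral_cst.
Qed.

Lemma ae_cst_le_integral_comp (F : T -> \bar R) (a : \bar R)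
    (G : \bar R -> \bar R) :
  measurable_fun setT F -> ae_eq pi setT F (cst a) ->
  (forall x, 0 <= G x) -> G a \is a fin_num ->
  G a * pi setT <= \int[pi]_x G (F x).
Proof.
move=> mF Fa G0 Ga_fin; pose S := setT `&` F @^-1` [set a].
have mS : measurable S by apply: mF => //; exact: emeasurable_set1.
pose lower x := (fine (G a) * \1_S x)%:E.
have mlower : measurable_fun setT lower.
  exact/measurable_EFinP/measurable_funM/measurable_indic.
have lower_ae : ae_eq pi setT lower (cst (fine (G a))%:E).
  apply: filterS Fa => x Fx _; rewrite /lower indicE mem_set ?mulr1 //.
  by split => //; exact: Fx.
have -> : G a * pi setT = \int[pi]_x lower x.
  rewrite (ae_eq_integral _ _ _ mlower _ lower_ae) //.
  by rewrite integral_cst // fineK.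
apply: ge0_le_integralT => x.
  by rewrite lee_fin mulr_ge0 // fine_ge0.
rewrite /lower indicE; have [/set_mem [_ /= ->]|_] := boolP (x \in S).
  by rewrite mulr1 fineK.
by rewrite mulr0.
Qed.

Lemma le_Dphi_mscale (phi : R -> \bar R) (k : {nonneg R}) :
  (forall t, 0 <= phi t) -> phi k%:num \is a fin_num ->
  phi k%:num * pi setT <= Dphi phi (mscale k pi) pi.
Proof.
move=> phi0 phik_fin; rewrite /Dphi asboolT; last exact: mscale_dominates.
have muk := mscale_dominates k.
apply: (ae_cst_le_integral_comp (G := phi \o fine) _ (Radon_Nikodym_mscale k)).
- exact/measurable_int/Radon_Nikodym_integrable.
- by move=> x; exact: phi0.
- exact: phik_fin.
Qed.

End constant_density.

Theorem mainTheorem11 (R : realType) (d : nat) (O : set 'rV[R]_d)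
  (pi : {finite_measure set (Rd R d) -> \bar R}) (phi : R -> \bar R) :
  open O -> lipschitz_boundary O ->
  pi (~` O) = 0%E -> (0 < pi O)%E ->
  (* φ : [0,∞) → [0,∞], extended by +∞ on (-∞,0) *)
  (forall t, t < 0 -> phi t = +oo%E) ->
  (forall t, 0 <= t -> (0 <= phi t)%E) ->
  (forall x y l : R, 0 <= x -> 0 <= y -> 0 <= l <= 1 ->
     (phi (l * x + (1 - l) * y)%R <= l%:E * phi x + (1 - l)%R%:E * phi y)%E) ->
  phi 1 = 0%E ->
  (\forall t \near (1 : R), phi t \is a fin_num) ->
  (\forall t \near (1 : R), derivable (fun s => fine (phi s)) t 1) ->
  derive1 (fun s => fine (phi s)) 1 = 0 ->
  derivable (derive1 (fun s => fine (phi s))) 1 1 ->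
  derive1 (derive1 (fun s => fine (phi s))) 1 = 1 ->
  ~ (exists c : R, 0 < c /\
      forall (mu : {finite_measure set (Rd R d) -> \bar R}) (rho : Rd R d -> R),
        mu (~` O) = 0%E ->
        (* rho is a version of the density dμ/dπ *)
        measurable_fun setT rho -> (forall x, 0 <= rho x) ->
        (forall A, measurable A -> mu A = (\int[pi]_(x in A) (rho x)%:E)%E) ->
        (* φ'(rho) is defined and differentiable on O *)
        (forall x, O x -> derivable (fun s => fine (phi s)) (rho x) 1) ->
        (forall x, O x ->
           differentiable (fun y : 'rV[R]_d => derive1 (fun s => fine (phi s)) (rho y)) x) ->
        (\int[mu]_(x in O)
            (grad_norm2 (fun y : 'rV[R]_d => derive1 (fun s => fine (phi s)) (rho y)) x)%:E
          >= c%:E * Dphi phi mu pi)%E).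
Proof.
move=> oO _ piO0 piO_gt0 phi_neg phi_ge0 _ _ phi_fin phi_der _ _ phi''1.
move=> [c [c_gt0 ineq]].
have phi0 t : (0 <= phi t)%E.
  by have [/phi_neg ->|/phi_ge0 //] := ltP t 0; rewrite leey.
have phi''1_neq0 : derive1 (derive1 (fun s => fine (phi s))) 1 != 0.
  by rewrite phi''1 oner_eq0.
have [k [phik_fin phi_derk phik_neq0]] :=
  exists_fin_nonzero_near phi_fin phi_der phi''1_neq0.
have k_ge0 : 0 <= k.
  by rewrite leNgt; apply/negP => /phi_neg phik; rewrite phik in phik_fin.
pose kn := NngNum k_ge0.
have muO : mscale kn pi (~` O) = 0%E by rewrite /mscale /= piO0 mule0.
have muE A : measurable A -> mscale kn pi A = (\int[pi]_(x in A) k%:E)%E.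
  by move=> mA; rewrite integral_cst.
have := ineq (mscale kn pi) (fun=> k) muO (measurable_cst _) (fun=> k_ge0) muE
  (fun _ _ => phi_derk) (fun _ _ => differentiable_cst _ _).
rewrite (eq_integral (fun=> 0%E)) ?integral0; last first.
  by move=> x _; rewrite grad_norm2_cst.
apply/negP; rewrite -ltNge mule_gt0 ?lte_fin //.
apply: (lt_le_trans _ (le_Dphi_mscale (k := kn) pi phi0 phik_fin)).
have piT_gt0 : (0 < pi setT)%E.
  apply: lt_le_trans piO_gt0 _; apply: le_measure; rewrite ?inE //.
  exact: sub_sigma_algebra.
by rewrite mule_gt0 //= -(fineK phik_fin) lte_fin lt_def phik_neq0 fine_ge0.
Qed.
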